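(* Let $I$ be a compact interval in $\mathbb{R}$ (of positive length) and $f:I\to\mathcal{K}(\mathbb{R})$ continuous. Then the distance set $\Delta(\mathcal{G}_*(f))=\{|x-x_*|+\mathfrak{H}(f(x),f(x_* )):x,x_*\in I\}$ is an interval, and $\dim_H\Delta(\mathcal{G}_*(f))=\underline{\dim}_B\Delta(\mathcal{G}_*(f))=\overline{\dim}_B\Delta(\mathcal{G}_*(f))=1$.
   Context: $\mathcal{K}(\mathbb{R})$: non-empty compact subsets of $\mathbb{R}$ with the Hausdorff distance $\mathfrak{H}$. $\mathcal{G}_*(f)=\{(x,f(x)):x\in I\}$. $\dim_H$, $\underline{\dim}_B$, $\overline{\dim}_B$: Hausdorff, lower box and upper box dimensions. *)

From HB Require Import structures.
From mathcomp Require Import all_boot all_order all_algebra.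
From mathcomp Require Import all_classical all_reals all_analysis.
Set Implicit Arguments. Unset Strict Implicit. Unset Printing Implicit Defensive.
Import Order.TTheory GRing.Theory Num.Theory.
Import numFieldNormedType.Exports.
Local Open Scope classical_set_scope.
Local Open Scope ring_scope.

Section Defs.
Variable R : realType.

Definition nonempty_compact (A : set R) : Prop := A !=set0 /\ compact A.

Definition dist_pt (a : R) (B : set R) : R := inf [set `|a - b| | b in B].

Definition hausdorff_dist (A B : set R) : R :=
  Num.max (sup [set dist_pt a B | a in A]) (sup [set dist_pt b A | b in B]).

Definition hcontinuous_on (I : set R) (f : R -> set R) : Prop :=
  forall x, I x -> forall e : R, 0 < e -> exists2 d : R, 0 < d &
    forall y, I y -> `|x - y| < d -> hausdorff_dist (f x) (f y) < e.

Definition graph_distance_set (I : set R) (f : R -> set R) : set R :=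
  [set r | exists x y, I x /\ I y /\ r = `|x - y| + hausdorff_dist (f x) (f y)].

Definition ediam (U : set R) : \bar R :=
  ereal_sup [set (`|x - y|)%:E | x in U & y in U].

Definition hausdorff_content (s d : R) (E : set R) : \bar R :=
  ereal_inf [set (\sum_(i <oo) ((fine (ediam (U i))) `^ s)%:E)%E
            | U in [set U : nat -> set R |
                    E `<=` \bigcup_i U i /\ forall i, (ediam (U i) <= d%:E)%E]].

(* s-dimensional Hausdorff (outer) measure: lim_{d -> 0+} = sup_{d > 0} *)
Definition hausdorff_measure (s : R) (E : set R) : \bar R :=
  ereal_sup [set hausdorff_content s d E | d in [set d : R | 0 < d]].

Definition hausdorff_dim (E : set R) : \bar R :=
  ereal_inf [set s%:E | s in [set s : R | 0 <= s /\ hausdorff_measure s E = 0%E]].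

Definition cover_number (d : R) (E : set R) : \bar R :=
  ereal_inf [set (n%:R)%:E | n in [set n : nat | exists U : nat -> set R,
               E `<=` \bigcup_(i in [set i | (i < n)%N]) U i /\
               forall i, (i < n)%N -> (ediam (U i) <= d%:E)%E]].

Definition box_ratio (E : set R) (d : R) : \bar R :=
  (ln (fine (cover_number d E)) / (- ln d))%:E.

Definition lower_box_dim (E : set R) : \bar R :=
  ereal_sup [set ereal_inf [set box_ratio E d | d in [set d : R | 0 < d < e]]
            | e in [set e : R | 0 < e]].

Definition upper_box_dim (E : set R) : \bar R :=
  ereal_inf [set ereal_sup [set box_ratio E d | d in [set d : R | 0 < d < e]]
            | e in [set e : R | 0 < e]].

End Defs.

From HB Require Import structures.
From mathcomp Require Import all_boot all_order all_algebra.
From mathcomp Require Import all_classical all_reals all_analysis.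
From mathcomp Require Import ring lra.
Import Order.TTheory GRing.Theory Num.Theory.
Import numFieldNormedType.Exports.
Import archimedean.Num.Theory.
Local Open Scope classical_set_scope.
Local Open Scope ring_scope.

(* Fixing x, the map y |-> |x - y| + H(f x, f y) is continuous on [a, b], so its image
   is a connected set containing 0; the distance set is the union of these images, hence
   connected, i.e. an interval.  It is bounded (by compactness) and contains [0, b - a], so
   it suffices that a bounded set E of reals containing a nondegenerate interval [u, v] has
   Hausdorff and box dimension 1.  Lower bounds come from Lebesgue measure: a countable
   cover of [u, v] by sets of diameters r_i satisfies 2 * sum r_i >= v - u, which bounds
   the s-dimensional Hausdorff content (s <= 1) and the cover numbers N_d >= (v - u)/(2d)
   from below.  Upper bounds come from covering E by a grid of intervals of length h: this
   costs about h^(s-1) for H^s and gives N_d <= (q - p + 1)/d, so log N_d / -log d -> 1. *)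

Section HausdorffDistance.
Context {R : realType}.
Implicit Types (A B C : set R) (a c : R).

Definition nonempty_bounded A := A !=set0 /\ exists M, forall x, A x -> `|x| <= M.

Lemma nonempty_compact_bounded A : nonempty_compact A -> nonempty_bounded A.
Proof.
move=> [A0 /compact_bounded [M [_ HM]]]; split => //.
exists (`|M| + 1) => x Ax; apply: (HM (`|M| + 1)) => //.
by rewrite (le_lt_trans (ler_norm _)) ?ltrDl.
Qed.

Lemma dist_pt_ge0 a B : B !=set0 -> 0 <= dist_pt a B.
Proof.
move=> [b Bb]; apply: lb_le_inf; first by exists `|a - b|, b.
by move=> _ [c _ <-].
Qed.

Lemma dist_pt_le a {B b} : B b -> dist_pt a B <= `|a - b|.
Proof. by move=> Bb; apply: ge_inf; [exists 0 => _ [c _ <-] | exists b]. Qed.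

Lemma dist_pt_triangle a a' {B} : B !=set0 -> dist_pt a B <= `|a - a'| + dist_pt a' B.
Proof.
move=> [b0 Bb0]; rewrite -lerBlDl; apply: lb_le_inf; first by exists `|a' - b0|, b0.
move=> _ [b Bb <-]; rewrite lerBlDl.
apply: (le_trans (dist_pt_le a Bb)); exact: ler_distD.
Qed.

Lemma hausdorff_distC A B : hausdorff_dist A B = hausdorff_dist B A.
Proof. by rewrite /hausdorff_dist maxC. Qed.

Lemma dist_pt_le_hausdorff {a A B} : nonempty_bounded A -> nonempty_bounded B ->
  A a -> dist_pt a B <= hausdorff_dist A B.
Proof.
move=> [_ [MA HA]] [[b0 Bb0] _] Aa; rewrite /hausdorff_dist le_max.
apply/orP; left; apply: ub_le_sup; last by exists a.
exists (MA + `|b0|) => _ [a' Aa' <-].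
apply: (le_trans (dist_pt_le a' Bb0)); apply: (le_trans (ler_normB _ _)).
by rewrite lerD2r HA.
Qed.

Lemma hausdorff_dist_le A B c : A !=set0 -> B !=set0 ->
  (forall a, A a -> dist_pt a B <= c) -> (forall b, B b -> dist_pt b A <= c) ->
  hausdorff_dist A B <= c.
Proof.
move=> [a Aa] [b Bb] HA HB; rewrite ge_max; apply/andP; split; apply: ge_sup.
- by exists (dist_pt a B), a.
- by move=> _ [x Ax <-]; apply: HA.
- by exists (dist_pt b A), b.
- by move=> _ [x Bx <-]; apply: HB.
Qed.

Lemma hausdorff_dist_ge0 {A B} : nonempty_bounded A -> nonempty_bounded B ->
  0 <= hausdorff_dist A B.
Proof.
move=> nA nB; have [[a Aa] _] := nA.
apply: le_trans (dist_pt_le_hausdorff nA nB Aa).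
exact: dist_pt_ge0 nB.1.
Qed.

Lemma hausdorff_distxx {A} : nonempty_bounded A -> hausdorff_dist A A = 0.
Proof.
move=> nA; apply/le_anti; rewrite hausdorff_dist_ge0 // andbT.
have dA0 x : A x -> dist_pt x A <= 0.
  by move=> Ax; apply: (le_trans (dist_pt_le x Ax)); rewrite subrr normr0.
by apply: hausdorff_dist_le; [exact: nA.1 | exact: nA.1 | exact: dA0 | exact: dA0].
Qed.

Lemma dist_pt_le_hausdorffD a {A B} : nonempty_bounded A -> nonempty_bounded B ->
  dist_pt a A <= dist_pt a B + hausdorff_dist B A.
Proof.
move=> nA nB; have [[b0 Bb0] _] := nB.
rewrite -lerBlDr; apply: lb_le_inf; first by exists `|a - b0|, b0.
move=> _ [b Bb <-]; rewrite lerBlDr; apply: (le_trans (dist_pt_triangle a b nA.1)).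
by rewrite lerD2l dist_pt_le_hausdorff.
Qed.

Lemma hausdorff_dist_triangle {A B C} :
  nonempty_bounded A -> nonempty_bounded B -> nonempty_bounded C ->
  hausdorff_dist A C <= hausdorff_dist A B + hausdorff_dist B C.
Proof.
move=> nA nB nC; apply: hausdorff_dist_le nA.1 nC.1 _ _ => [a Aa|c Cc].
  by apply: (le_trans (dist_pt_le_hausdorffD a nC nB)); rewrite lerD2r dist_pt_le_hausdorff.
apply: (le_trans (dist_pt_le_hausdorffD c nA nB)).
by rewrite (hausdorff_distC A B) addrC lerD2l hausdorff_distC dist_pt_le_hausdorff.
Qed.

Lemma ler_dist_hausdorff {A B C} :
  nonempty_bounded A -> nonempty_bounded B -> nonempty_bounded C ->
  `|hausdorff_dist A B - hausdorff_dist A C| <= hausdorff_dist B C.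
Proof.
move=> nA nB nC; have := hausdorff_dist_triangle nA nB nC.
have := hausdorff_dist_triangle nA nC nB; rewrite (hausdorff_distC C B).
by rewrite ler_norml => *; apply/andP; split; lra.
Qed.

End HausdorffDistance.

Section Diameter.
Context {R : realType}.
Implicit Types U : set R.

Lemma ediam_ge {U x y} : U x -> U y -> ((`|x - y|)%:E <= ediam U)%E.
Proof. by move=> Ux Uy; apply: ereal_sup_ubound; exists x => //; exists y. Qed.

Lemma ediam_le U h : (forall x y, U x -> U y -> `|x - y| <= h) -> (ediam U <= h%:E)%E.
Proof. by move=> Uh; apply: ge_ereal_sup => _ [x Ux [y Uy <-]]; rewrite lee_fin Uh. Qed.

Lemma ediam_set0 : ediam (@set0 R) = -oo%E.
Proof.
rewrite /ediam [X in ereal_sup X](_ : _ = set0) ?ereal_sup0 //.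
by apply/seteqP; split => // _ [x []].
Qed.

Lemma fine_ediam_ge0 U : 0 <= fine (ediam U).
Proof.
have [[x Ux]|/set0P/negP/negPn/eqP ->] := pselect (U !=set0); last by rewrite ediam_set0.
by move: (ediam_ge Ux Ux); rewrite subrr normr0; case: (ediam U) => //= r; rewrite lee_fin.
Qed.

Lemma fine_ediam_le U h : 0 <= h -> (ediam U <= h%:E)%E -> fine (ediam U) <= h.
Proof. by case: (ediam U) => //= r _; rewrite lee_fin. Qed.

Lemma dist_le_fine_ediam {U x y} : (ediam U < +oo)%E -> U x -> U y ->
  `|x - y| <= fine (ediam U).
Proof.
move=> Uoo Ux Uy; have := ediam_ge Ux Uy; move: Uoo.
by case: (ediam U) => //= r; rewrite !lee_fin.
Qed.

End Diameter.

Section IntervalCovers.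
Context {R : realType}.

Lemma le_of_itv_sandwich {u v p q : R} {E : set R} :
  u <= v -> `[u, v] `<=` E -> E `<=` `[p, q] -> p <= q.
Proof.
move=> uv uvE Epq; have /uvE/Epq : u \in `[u, v] by rewrite in_itv /= lexx.
by rewrite /= in_itv /= => /andP[pu uq]; exact: le_trans pu uq.
Qed.

Lemma itv_cover_length {u v : R} {U : nat -> set R} : u < v ->
  `[u, v] `<=` \bigcup_i U i -> (forall i, ediam (U i) < +oo)%E ->
  ((v - u)%:E <= 2%:E * \sum_(i <oo) (fine (ediam (U i)))%:E)%E.
Proof.
move=> uv cov Ufin.
pose r i := fine (ediam (U i)); pose c i := xget 0 (U i).
(* [U i] lies in the interval of radius [r i] around any of its points, hence the factor 2. *)
pose V i := [set` `[c i - r i, c i + r i]] : set R.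
have UV i : U i `<=` V i.
  move=> x Ux; have Uc : U i (c i) by apply: xgetI Ux.
  have := dist_le_fine_ediam (Ufin i) Ux Uc.
  by rewrite /V /= in_itv /= ler_norml /r => /andP[? ?]; apply/andP; split; lra.
have : (lebesgue_measure ([set` `[u, v]] : set R) <=
        \sum_(i <oo) lebesgue_measure (V i))%E.
  apply: (measure_sigma_subadditive lebesgue_measure) => [i| |]; first exact: measurable_itv.
    exact: measurable_itv.
  by move=> x /cov [i _ /UV Vx]; exists i.
rewrite lebesgue_measure_itv /= lte_fin uv => /le_trans; apply.
rewrite -nneseriesZl => [|i _]; last by rewrite lee_fin fine_ediam_ge0.
apply: lee_nneseries => // i _; rewrite lebesgue_measure_itv /=.
have r0 : 0 <= r i by exact: fine_ediam_ge0.
case: ifP => _; last by rewrite lee_fin mulr_ge0.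
by rewrite -EFinD -EFinM lee_fin /r; lra.
Qed.

Definition grid_cell (p h : R) (k : nat) : set R :=
  [set` `[p + k%:R * h, p + k%:R * h + h]].

Definition grid_count (p q h : R) : nat := (Num.truncn ((q - p) / h)).+1.

Lemma grid_cell_cover {p q h x} : 0 < h -> p <= x <= q ->
  exists2 k, (k < grid_count p q h)%N & grid_cell p h k x.
Proof.
move=> h0 /andP[px xq]; exists (Num.truncn ((x - p) / h)).
  by rewrite ltnS le_truncn // ler_pM2r ?invr_gt0 // lerB.
have xp : 0 <= x - p by rewrite subr_ge0.
have /andP[] := truncn_itv (divr_ge0 xp (ltW h0)).
rewrite ler_pdivlMr // ltr_pdivrMr // -addn1 natrD /grid_cell /= in_itv /= => k1 k2.
by apply/andP; split; lra.
Qed.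

Lemma grid_count_le {p q h} : 0 < h -> p <= q -> (grid_count p q h)%:R * h <= q - p + h.
Proof.
move=> h0 pq; rewrite /grid_count -addn1 natrD mulrDl mul1r lerD2r -ler_pdivlMr //.
by rewrite truncn_le divr_ge0 ?subr_ge0 // ltW.
Qed.

Lemma ediam_grid_cell {p h k} : 0 <= h -> (ediam (grid_cell p h k) <= h%:E)%E.
Proof.
move=> h0; apply: ediam_le => x y; rewrite /grid_cell /= !in_itv /= => /andP[? ?] /andP[? ?].
by rewrite ler_norml; apply/andP; split; lra.
Qed.

Lemma nneseries_lt_cst (c : R) n : 0 <= c ->
  (\sum_(i <oo) (if (i < n)%N then c else 0)%:E = (n%:R * c)%:E)%E.
Proof.
move=> c0; rewrite mulr_natl; rewrite (nneseries_split 0 n); last by move=> k _; case: ifP.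
rewrite add0n eseries0 ?adde0; last by move=> i ni _; rewrite ltnNge ni.
rewrite big_nat_cond (eq_bigr (fun=> c%:E)); last by move=> i /andP[/andP[_ ->]].
rewrite -big_nat_cond; elim: n {c0} => [|n IH]; first by rewrite big_geq.
by rewrite big_nat_recr //= IH mulrS EFinD addeC.
Qed.

End IntervalCovers.

Section HausdorffDimension.
Context {R : realType}.
Implicit Types (E : set R) (u v p q s d h : R).

Lemma hausdorff_content_ge {E u v s d} : u < v -> `[u, v] `<=` E ->
  0 <= s <= 1 -> 0 < d <= 1 -> (((v - u) / 2)%:E <= hausdorff_content s d E)%E.
Proof.
move=> uv uvE /andP[s0 s1] /andP[d0 d1].
apply: le_ereal_inf_tmp => _ [U [cov Ud] <-].
have r_le_rs i : fine (ediam (U i)) <= fine (ediam (U i)) `^ s.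
  have r1 : fine (ediam (U i)) <= 1 by rewrite fine_ediam_le // (le_trans (Ud i)) // lee_fin.
  have [->|rn0] := eqVneq (fine (ediam (U i))) 0; first exact: powR_ge0.
  by apply: ger1_powR s1; rewrite r1 lt_neqAle eq_sym rn0 fine_ediam_ge0.
rewrite EFinM lee_pdivrMr // muleC.
have Ufin i : (ediam (U i) < +oo)%E by exact: le_lt_trans (Ud i) (ltry d).
apply: (le_trans (itv_cover_length uv (subset_trans uvE cov) Ufin)).
apply: lee_wpmul2l => //; apply: lee_nneseries => [i _ _|i _].
  by rewrite lee_fin fine_ediam_ge0.
by rewrite lee_fin r_le_rs.
Qed.

Lemma hausdorff_measure_neq0 {E u v s} : u < v -> `[u, v] `<=` E -> 0 <= s < 1 ->
  hausdorff_measure s E != 0%E.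
Proof.
move=> uv uvE /andP[s0 s1]; apply/eqP => E0.
have : (hausdorff_content s 1 E <= hausdorff_measure s E)%E.
  by apply: ereal_sup_ubound; exists 1 => //; exact: ltr01.
rewrite E0; apply/negP; rewrite -ltNge; apply: lt_le_trans (hausdorff_content_ge uv uvE _ _).
- by rewrite lte_fin divr_gt0 // subr_gt0.
- by rewrite s0 ltW.
- by rewrite ltr01 lexx.
Qed.

Lemma hausdorff_content_le_grid {E p q s d h} : E `<=` `[p, q] ->
  0 < s -> 0 < h <= d ->
  (hausdorff_content s d E <= ((grid_count p q h)%:R * h `^ s)%:E)%E.
Proof.
move=> Epq s0 /andP[h0 hd].
pose U k := if (k < grid_count p q h)%N then grid_cell p h k else set0.
apply: (@le_trans _ _ (\sum_(k <oo) ((fine (ediam (U k))) `^ s)%:E)%E).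
  apply: ereal_inf_lbound; exists U => //; split.
    move=> x /Epq; rewrite /= in_itv /= => /(grid_cell_cover h0) [k kn hk].
    by exists k => //; rewrite /U kn.
  move=> k; rewrite /U; case: ifP => _; last by rewrite ediam_set0 leNye.
  by apply: (le_trans (ediam_grid_cell (ltW h0))); rewrite lee_fin.
rewrite -nneseries_lt_cst ?powR_ge0 //; apply: lee_nneseries => [k _ _|k _].
  by rewrite lee_fin powR_ge0.
rewrite /U; case: ifP => _; last by rewrite ediam_set0 /= powR0 // gt_eqF.
rewrite lee_fin ge0_ler_powR ?nnegrE ?fine_ediam_ge0 ?(ltW h0) ?(ltW s0) //.
exact: fine_ediam_le (ltW h0) (ediam_grid_cell (ltW h0)).
Qed.

Lemma hausdorff_content_eq0 {E p q s d} : p <= q -> E `<=` `[p, q] -> 1 < s -> 0 < d ->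
  hausdorff_content s d E = 0%E.
Proof.
move=> pq Epq s1 d0; apply/le_anti/andP; split; last first.
  apply: le_ereal_inf_tmp => _ [U _ <-].
  by apply: nneseries_ge0 => i _ _; rewrite lee_fin powR_ge0.
apply/lee_addgt0Pr => e e0; rewrite add0e.
have L0 : 0 < q - p + 1 by lra.
pose t := (e / (q - p + 1)) `^ (s - 1)^-1.
pose h := Num.min (Num.min d 1) t.
have h0 : 0 < h by rewrite !lt_min d0 ltr01 powR_gt0 // divr_gt0.
have [hd h1 ht] : [/\ h <= d, h <= 1 & h <= t] by split; rewrite !ge_min ?lexx ?orbT.
have hs1 : h `^ (s - 1) <= e / (q - p + 1).
  have -> : e / (q - p + 1) = t `^ (s - 1).
    rewrite -powRrM mulVf ?powRr1 ?divr_ge0 ?(ltW e0) ?(ltW L0) //.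
    by rewrite subr_eq0 gt_eqF.
  by rewrite ge0_ler_powR ?nnegrE ?(ltW h0) ?powR_ge0 //; lra.
apply: (le_trans (hausdorff_content_le_grid (h := h) Epq _ _)); first lra.
  by rewrite h0 hd.
have -> : h `^ s = h * h `^ (s - 1) by rewrite mulr_powRB1 // ?(ltW h0); lra.
rewrite lee_fin mulrA.
apply: (le_trans (ler_wpM2r (powR_ge0 _ _) (grid_count_le h0 pq))).
apply: (le_trans (ler_wpM2l _ hs1)); first lra.
have eL : 0 <= e / (q - p + 1) by rewrite divr_ge0 ?(ltW e0) ?(ltW L0).
apply: (le_trans (ler_wpM2r eL (_ : q - p + h <= q - p + 1))); first lra.
by rewrite mulrC divfK ?gt_eqF.
Qed.

Lemma hausdorff_measure_eq0 {E p q s} : p <= q -> E `<=` `[p, q] -> 1 < s ->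
  hausdorff_measure s E = 0%E.
Proof.
move=> pq Epq s1; apply/le_anti/andP; split.
  by apply: ge_ereal_sup => _ [d d0 <-]; rewrite (hausdorff_content_eq0 pq Epq s1 d0).
apply: ereal_sup_ubound; exists 1; first exact: ltr01.
exact: hausdorff_content_eq0 pq Epq s1 ltr01.
Qed.

Lemma hausdorff_dim_eq1 {E u v p q} : u < v -> `[u, v] `<=` E -> E `<=` `[p, q] ->
  hausdorff_dim E = 1%:E.
Proof.
move=> uv uvE Epq; have pq := le_of_itv_sandwich (ltW uv) uvE Epq.
apply/le_anti/andP; split.
  apply/lee_addgt0Pr => e e0; rewrite -EFinD; apply: ereal_inf_lbound.
  by exists (1 + e) => //; split; [lra | apply: hausdorff_measure_eq0 pq Epq _; lra].
apply: le_ereal_inf_tmp => _ [s [s0 Es] <-]; rewrite lee_fin leNgt; apply/negP => s1.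
by have := hausdorff_measure_neq0 (s := s) uv uvE; rewrite s0 s1 Es eqxx => /(_ isT).
Qed.

End HausdorffDimension.

Section BoxDimension.
Context {R : realType}.
Implicit Types (E : set R) (u v p q d : R).

Lemma cover_number_le_grid {E p q d} : E `<=` `[p, q] -> 0 < d ->
  (cover_number d E <= (grid_count p q d)%:R%:E)%E.
Proof.
move=> Epq d0; apply: ereal_inf_lbound; exists (grid_count p q d) => //.
exists (grid_cell p d); split => [x /Epq|k _]; last exact: ediam_grid_cell (ltW d0).
by rewrite /= in_itv /= => /(grid_cell_cover d0) [k kn hk]; exists k.
Qed.

Lemma cover_number_ge {E u v d} : u < v -> `[u, v] `<=` E -> 0 < d ->
  (((v - u) / (2 * d))%:E <= cover_number d E)%E.
Proof.
move=> uv uvE d0; apply: le_ereal_inf_tmp => _ [n [U [cov Ud]] <-].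
pose W i := if (i < n)%N then U i else set0.
have Wd i : (ediam (W i) <= d%:E)%E.
  by rewrite /W; case: ifP => [/Ud //|_]; rewrite ediam_set0 leNye.
have cW : `[u, v] `<=` \bigcup_i W i.
  by move=> x /uvE /cov [i /= ilt Ux]; exists i; rewrite // /W ilt.
have Wn : (\sum_(i <oo) (fine (ediam (W i)))%:E <= (n%:R * d)%:E)%E.
  rewrite -nneseries_lt_cst ?(ltW d0) //; apply: lee_nneseries => [i _ _|i _].
    by rewrite lee_fin fine_ediam_ge0.
  rewrite /W lee_fin; case: ifP => [/Ud Ui|_]; last by rewrite ediam_set0.
  exact: fine_ediam_le (ltW d0) Ui.
have := itv_cover_length uv cW (fun i => le_lt_trans (Wd i) (ltry d)).
move=> /le_trans /(_ (lee_wpmul2l _ Wn)); rewrite lee_fin => /(_ (ler0n _ 2)).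
rewrite -EFinM !lee_fin ler_pdivrMr ?mulr_gt0 // => vu.
by rewrite mulrCA.
Qed.

Lemma cover_number_fin {E u v p q d} : u < v -> `[u, v] `<=` E -> E `<=` `[p, q] ->
  0 < d <= 1 ->
  exists2 c, cover_number d E = c%:E & (v - u) / (2 * d) <= c <= (q - p + 1) / d.
Proof.
move=> uv uvE Epq /andP[d0 d1]; have pq := le_of_itv_sandwich (ltW uv) uvE Epq.
have := cover_number_ge uv uvE d0; have := cover_number_le_grid Epq d0.
case: (cover_number d E) => [c| |]; rewrite ?leye_eq ?leeNy_eq // !lee_fin => cn nc.
exists c => //; rewrite nc /= ler_pdivlMr //.
have := grid_count_le d0 pq; rewrite -(ler_pM2r d0) in cn; lra.
Qed.

Lemma ln_cover_number_dist_le {E u v p q} : u < v -> `[u, v] `<=` E -> E `<=` `[p, q] ->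
  forall d, 0 < d < 1 ->
  `|ln (fine (cover_number d E)) / (- ln d) - 1| <=
    (`|ln ((v - u) / 2)| + `|ln (q - p + 1)|) / (- ln d).
Proof.
move=> uv uvE Epq d /andP[d0 d1].
have d01 : 0 < d <= 1 by rewrite d0 ltW.
have [c -> /andP[c_ge c_le]] := cover_number_fin uv uvE Epq d01.
have vu0 : 0 < v - u by rewrite subr_gt0.
have L0 : 0 < - ln d by rewrite oppr_gt0 ln_lt0 // d0.
have c0 : 0 < c by apply: lt_le_trans c_ge; rewrite divr_gt0 // mulr_gt0.
have qp1 : 0 < q - p + 1.
  by apply: lt_le_trans (_ : 0 < c * d) _; rewrite ?mulr_gt0 // -ler_pdivlMr.
have lo : ln ((v - u) / 2) - ln d <= ln c.
  rewrite -ln_div ?posrE ?divr_gt0 // -mulrA -invfM.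
  by rewrite ler_ln ?posrE ?divr_gt0 ?mulr_gt0.
have hi : ln c <= ln (q - p + 1) - ln d.
  by rewrite -ln_div ?posrE ?divr_gt0 // ler_ln ?posrE ?divr_gt0.
rewrite /= -[X in _ - X](divff (lt0r_neq0 L0)) -mulrBl normrM.
rewrite [`|(- ln d)^-1|]gtr0_norm ?invr_gt0 //.
rewrite ler_pM2r ?invr_gt0 // ler_norml.
have := ler_norm (ln (q - p + 1)); have := normr_ge0 (ln (q - p + 1)).
have := normr_ge0 (ln ((v - u) / 2)); have := ler_norm (- ln ((v - u) / 2)).
by rewrite normrN => *; apply/andP; split; lra.
Qed.

Definition cvg_right0 (g : R -> R) (l : R) :=
  forall e, 0 < e -> exists2 e0, 0 < e0 & forall d, 0 < d < e0 -> `|g d - l| <= e.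

Lemma cvg_right0_inv_ln {g : R -> R} {l K} : 0 <= K ->
  (forall d, 0 < d < 1 -> `|g d - l| <= K / (- ln d)) -> cvg_right0 g l.
Proof.
move=> K0 gK e e0; have K1e : 0 < (K + 1) / e by rewrite divr_gt0 //; lra.
exists (Num.min (1 / 2) (expR (- ((K + 1) / e)))).
  by rewrite lt_min divr_gt0 // expR_gt0.
move=> d /andP[d0]; rewrite lt_min => /andP[d_half d_exp].
have d1 : d < 1 by apply: lt_trans d_half _; lra.
have lnd : (K + 1) / e < - ln d.
  by rewrite ltrNr -[X in _ < X]expRK ltr_ln ?posrE ?expR_gt0.
apply: (le_trans (gK d _)); first by rewrite d0 d1.
rewrite ler_pdivrMr; last exact: lt_trans lnd.
by move: lnd; rewrite ltr_pdivrMr // => ?; lra.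
Qed.

Lemma cvg_right0_witness {g l e eps} : cvg_right0 g l -> 0 < e -> 0 < eps ->
  exists d, 0 < d < e /\ `|g d - l| <= eps.
Proof.
move=> gl e0 eps0; have [e1 e10 gle] := gl eps eps0.
have m0 : 0 < Num.min e e1 by rewrite lt_min e0 e10.
have [me me1] : Num.min e e1 <= e /\ Num.min e e1 <= e1 by split; rewrite ge_min lexx ?orbT.
exists (Num.min e e1 / 2); split; first by apply/andP; split; lra.
by apply: gle; apply/andP; split; lra.
Qed.

Lemma liminf_right0_eq g l : cvg_right0 g l ->
  ereal_sup [set ereal_inf [set (g d)%:E | d in [set d | 0 < d < e]]
            | e in [set e | 0 < e]] = l%:E.
Proof.
move=> gl; apply/le_anti/andP; split.
  apply: ge_ereal_sup => _ [e e0 <-]; apply/lee_addgt0Pr => eps eps0.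
  have [d [de gd]] := cvg_right0_witness gl e0 eps0.
  apply: (le_trans (ereal_inf_lbound _)); first by exists d.
  by move: gd; rewrite -EFinD lee_fin ler_norml => /andP[_ ?]; lra.
apply/lee_subgt0Pr => eps eps0; have [e e0 gle] := gl eps eps0.
apply: (le_trans _ (ereal_sup_ubound _)); last by exists e.
apply: le_ereal_inf_tmp => _ [d de <-].
by move: (gle d de); rewrite -EFinB lee_fin ler_norml => /andP[? _]; lra.
Qed.

Lemma limsup_right0_eq g l : cvg_right0 g l ->
  ereal_inf [set ereal_sup [set (g d)%:E | d in [set d | 0 < d < e]]
            | e in [set e | 0 < e]] = l%:E.
Proof.
move=> gl; apply/le_anti/andP; split.
  apply/lee_addgt0Pr => eps eps0; have [e e0 gle] := gl eps eps0.
  apply: (le_trans (ereal_inf_lbound _)); first by exists e.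
  apply: ge_ereal_sup => _ [d de <-].
  by move: (gle d de); rewrite -EFinD lee_fin ler_norml => /andP[_ ?]; lra.
apply: le_ereal_inf_tmp => _ [e e0 <-]; apply/lee_subgt0Pr => eps eps0.
have [d [de gd]] := cvg_right0_witness gl e0 eps0.
apply: (le_trans _ (ereal_sup_ubound _)); last by exists d.
by move: gd; rewrite -EFinB lee_fin ler_norml => /andP[? _]; lra.
Qed.

Lemma box_dim_eq1 {E u v p q} : u < v -> `[u, v] `<=` E -> E `<=` `[p, q] ->
  lower_box_dim E = 1%:E /\ upper_box_dim E = 1%:E.
Proof.
move=> uv uvE Epq.
have K0 : 0 <= `|ln ((v - u) / 2)| + `|ln (q - p + 1)| by rewrite addr_ge0.
have := cvg_right0_inv_ln K0 (ln_cover_number_dist_le uv uvE Epq).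
by move=> ratio1; split; [exact: liminf_right0_eq | exact: limsup_right0_eq].
Qed.

End BoxDimension.

Lemma epsdelta_within_continuous {R : realType} (A : set R) (g : R -> R) :
  (forall x, A x -> forall e, 0 < e -> exists2 d, 0 < d &
    forall y, A y -> `|x - y| < d -> `|g x - g y| < e) ->
  {within A, continuous g}.
Proof.
move=> gA; apply/subspace_continuousP => x Ax; apply/cvgrPdist_lt => e e0.
have [d d0 gd] := gA x Ax e e0.
by rewrite near_withinE; apply/nbhs_ballP; exists d => //= y xy Ay; exact: gd.
Qed.

Definition graph_dist {R : realType} (f : R -> set R) (x y : R) : R :=
  `|x - y| + hausdorff_dist (f x) (f y).

Lemma graph_distance_setE {R : realType} (I : set R) (f : R -> set R) :
  graph_distance_set I f = \bigcup_(x in I) (graph_dist f x @` I).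
Proof.
apply/seteqP; split => [_ [x [y [Ix [Iy ->]]]]|_ [x Ix [y Iy <-]]].
  by exists x => //; exists y.
by exists x, y.
Qed.

Section GraphDistance.
Context {R : realType}.
Context {I : set R} {f : R -> set R}.
Hypothesis fB : forall {x}, I x -> nonempty_bounded (f x).

Lemma graph_distxx {x} : I x -> graph_dist f x x = 0.
Proof. by move=> Ix; rewrite /graph_dist subrr normr0 add0r (hausdorff_distxx (fB Ix)). Qed.

Lemma graph_dist_ge0 x y : I x -> I y -> 0 <= graph_dist f x y.
Proof. by move=> Ix Iy; rewrite addr_ge0 ?(hausdorff_dist_ge0 (fB Ix) (fB Iy)). Qed.

Lemma graph_distC x y : graph_dist f x y = graph_dist f y x.
Proof. by rewrite /graph_dist distrC hausdorff_distC. Qed.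

Lemma graph_dist_triangle {x y z} : I x -> I y -> I z ->
  graph_dist f x z <= graph_dist f x y + graph_dist f y z.
Proof.
move=> Ix Iy Iz; have := hausdorff_dist_triangle (fB Ix) (fB Iy) (fB Iz).
by have := ler_distD y x z; rewrite /graph_dist; lra.
Qed.

Lemma ler_dist_graph_dist {x y z} : I x -> I y -> I z ->
  `|graph_dist f x y - graph_dist f x z| <= graph_dist f y z.
Proof.
move=> Ix Iy Iz; have := ler_dist_hausdorff (fB Ix) (fB Iy) (fB Iz).
have := ler_dist_dist (x - y) (x - z).
have -> : x - y - (x - z) = z - y by ring.
rewrite [`|z - y|]distrC.
by rewrite /graph_dist !ler_norml => /andP[? ?] /andP[? ?]; apply/andP; split; lra.
Qed.

Hypothesis fC : hcontinuous_on I f.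

Lemma continuous_graph_dist {x} : I x -> {within I, continuous graph_dist f x}.
Proof.
move=> Ix; apply: epsdelta_within_continuous => y Iy e e0.
have [d d0 fd] := fC y Iy (e / 2) (divr_gt0 e0 (ltr0n _ 2)).
exists (Num.min d (e / 2)) => [|z Iz]; first by rewrite lt_min d0 divr_gt0.
rewrite lt_min => /andP[yzd yze]; apply: (le_lt_trans (ler_dist_graph_dist Ix Iy Iz)).
by have := fd z Iz yzd; rewrite /graph_dist; lra.
Qed.

Lemma is_interval_graph_distance_set : is_interval I -> is_interval (graph_distance_set I f).
Proof.
move=> /connected_intervalP cI; rewrite graph_distance_setE; apply/connected_intervalP.
apply: bigcup_connected => [|x Ix].
  by exists 0 => x Ix; exists x => //; exact: graph_distxx.
exact: connected_continuous_connected cI (continuous_graph_dist Ix).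
Qed.

Lemma graph_distance_set_bounded : I !=set0 -> compact I ->
  exists M, graph_distance_set I f `<=` `[0, M].
Proof.
move=> [a Ia] cI.
have [c /set_mem Ic cmax] := compact_EVT_max (ex_intro _ a Ia) cI (continuous_graph_dist Ia).
exists (2 * graph_dist f a c) => _ [x [y [Ix [Iy ->]]]].
rewrite /= in_itv /= -/(graph_dist f x y) graph_dist_ge0 //=.
have := graph_dist_triangle Ix Ia Iy; rewrite [graph_dist f x a]graph_distC.
have := cmax x (mem_set Ix); have := cmax y (mem_set Iy); lra.
Qed.

End GraphDistance.

Theorem proposition4p5 (R : realType) (a b : R) (f : R -> set R) :
  a < b ->
  (forall x, x \in `[a, b] -> nonempty_compact (f x)) ->
  hcontinuous_on [set` `[a, b]] f ->
  let D := graph_distance_set [set` `[a, b]] f in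
  is_interval D /\
  hausdorff_dim D = 1%:E /\ lower_box_dim D = 1%:E /\ upper_box_dim D = 1%:E.
Proof.
move=> ab fK fC D.
have Ia : a \in `[a, b] by rewrite in_itv /= lexx ltW.
have Ib : b \in `[a, b] by rewrite in_itv /= lexx ltW.
have fB x : [set` `[a, b]] x -> nonempty_bounded (f x).
  by move=> /fK /nonempty_compact_bounded.
have Dint : is_interval D := is_interval_graph_distance_set fB fC (@interval_is_interval R `[a, b]).
have [M DM] := graph_distance_set_bounded fB fC (ex_intro _ a Ia) (@segment_compact _ a b).
have D0 : D 0 by exists a, a; rewrite -(graph_distxx fB Ia).
have Dab : D (graph_dist f a b) by exists a, b.
have ab_pos : 0 < graph_dist f a b.
  have := hausdorff_dist_ge0 (fB _ Ia) (fB _ Ib).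
  by rewrite /graph_dist distrC gtr0_norm ?subr_gt0 //; lra.
have abD : `[0, graph_dist f a b] `<=` D.
  by move=> r; rewrite /= in_itv /=; exact: Dint D0 Dab r.
by split=> //; split; [exact: hausdorff_dim_eq1 ab_pos abD DM | exact: box_dim_eq1 ab_pos abD DM].
Qed.
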